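(* Let $(f,X)$ be a marked branched covering, let $\alpha$ be an arc satisfying the Blowing Up Conditions, let $n\ge1$, and let $(g,X)$ be obtained by blowing up $(f,X)$ $n$ times along $\alpha$. Suppose $\Lambda$ is an arc system in $(S^2,X)$ which is forward invariant under $f$ up to isotopy relative to $X$. If there exists a lift $\widetilde\Lambda$ under $f$ (of a subset of $\Lambda$) with $\widetilde\Lambda\simeq_X\Lambda$ and $\widetilde\Lambda\cap\mathrm{Int}(\alpha)=\emptyset$, then $\Lambda$ is forward invariant under $g$ up to isotopy relative to $X$.
   Context: Branched coverings of $S^2$ are orientation-preserving continuous maps locally of the form $z\mapsto z^k$, assumed postcritically finite; $C(f)$ is the critical set and $P(f)$ the closure of the union of its forward images. A marked branched covering $(f,X)$ has $X$ finite, $P(f)\subset X$, $f(X)\subset X$. An arc in $(S^2,Y)$ ($Y$ finite) is the image of $j:[0,1]\to S^2$ with $j(\{0,1\})\subset Y$ (endpoints $e$), $j|_{(0,1)}$ an embedding and $j((0,1))\cap Y=\emptyset$; $\simeq_Y$ is isotopy through such arcs. An arc system is a set of pairwise non-isotopic arcs in $(S^2,X)$; $\Lambda\simeq_X\Lambda'$ means each element of either is isotopic to a unique element of the other. A lift of an arc $\lambda$ under $f$ is the closure of a component of $f^{-1}(\lambda\setminus e(\lambda))$; a lift of an arc system $\Lambda_0$ is an arc system in $(S^2,X)$ whose elements are lifts of elements of $\Lambda_0$. $\Lambda$ is forward invariant under $f$ up to isotopy relative to $X$ if some subset $\Lambda_0\subset\Lambda$ has a lift $\widetilde\Lambda_0\simeq_X\Lambda$.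 Blowing Up Conditions for a closed embedded arc $\alpha$ with distinct endpoints $e_{\pm1}$: (1) $f|_\alpha$ is a homeomorphism; (2) $\alpha$ is a union of arcs $\alpha_1,\dots,\alpha_L$ in $(S^2,f^{-1}(X))$; (3) $\mathrm{Int}(\alpha)\cap(X\cup C(f))=\emptyset$. Blowing up $n$ times along $\alpha$: choose an open Jordan disc $W\supset\mathrm{Int}(\alpha)$ with $e(\alpha)\subset\partial W$, $\overline W\cap f^{-1}(X)=\alpha\cap f^{-1}(X)$, $f|_{\overline W}$ injective; choose a closed disc $D\subset W\cup e(\alpha)$ with $e(\alpha)\subset\partial D$ and a continuous map $c:S^2\setminus\mathrm{Int}(D)\to S^2$, the identity outside $W$, which is the extension of $h_1^{-1}$ for an isotopy $h_t$ ($h_0=\mathrm{id}$, $h_t=\mathrm{id}$ off $W$) of embeddings of $S^2\setminus\mathrm{Int}(\alpha)$ with $h_1(S^2\setminus\mathrm{Int}(\alpha))=S^2\setminus(D\setminus e(\alpha))$; $c$ maps each of the two boundary arcs $\partial D_\pm$ of $D$ from $e_{-1}$ to $e_{+1}$ homeomorphically onto $\alpha$. With $\phi_n(z)=A_2((A_1(z))^{2n})$ on the closed unit disc $\overline\Delta$, $A_1(z)=-i\frac{z+1}{z-1}$, $A_2(z)=\frac{z-1}{z+1}$, $\partial\Delta_\pm=\partial\Delta\cap\{\pm\mathrm{Im}z\ge0\}$, choose a homeomorphism $h'$ of the sphere with $h'([-1,1])=f(\alpha)$, $h'(\pm1)=f(e_{\pm1})$, and a homeomorphism $h'':D\to\overline\Delta$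 equal on $\partial D_\pm$ to $(\phi_n|_{\partial\Delta_\pm})^{-1}\circ(h')^{-1}\circ f\circ c$. Set $g=f\circ c$ on $S^2\setminus\mathrm{Int}(D)$ and $g=h'\circ\phi_n\circ h''$ on $D$. *)

(* Model: S^2 is the unit sphere in R^3 = R*R*R,
   the complex plane C is R*R (with hand-written complex arithmetic),
   the Riemann sphere C u {oo} is option (R*R), identified with S^2 by
   inverse stereographic projection from the north pole. *)
From mathcomp Require Import all_boot all_order all_algebra.
From mathcomp Require Import all_classical all_reals all_analysis.
Import Order.TTheory GRing.Theory Num.Theory.
Import numFieldTopology.Exports numFieldNormedType.Exports.
Set Implicit Arguments.
Unset Strict Implicit.
Unset Printing Implicit Defensive.
Local Open Scope classical_set_scope.
Local Open Scope ring_scope.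

Notation T3 R := (R * R * R)%type.
Notation CC R := (R * R)%type.

Definition unitI {R : realType} : set R := [set t | 0 <= t <= 1].
Definition openI {R : realType} : set R := [set t | 0 < t < 1].
Definition unitSq {R : realType} : set (R * R) :=
  [set p | unitI p.1 /\ unitI p.2].

Definition S2 {R : realType} : set (T3 R) :=
  [set p | p.1.1 ^+ 2 + p.1.2 ^+ 2 + p.2 ^+ 2 = 1].

Definition inj_on {T U : Type} (A : set T) (F : T -> U) :=
  forall x y, A x -> A y -> F x = F y -> x = y.

Definition embedding_on {T U : topologicalType} (A : set T) (F : T -> U) :=
  inj_on A F /\ {within A, continuous F} /\
  exists G : U -> T, {within F @` A, continuous G} /\
                     (forall x, A x -> G (F x) = x).

Definition homeo_onto {T U : topologicalType} (A : set T) (B : set U)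
  (F : T -> U) := embedding_on A F /\ F @` A = B.

Definition sInt {R : realType} (A : set (T3 R)) : set (T3 R) :=
  [set x | A x /\ exists e : R, 0 < e /\
     forall y, S2 y -> ball x e y -> A y].

Definition ropen {R : realType} (A : set (T3 R)) :=
  exists O : set (T3 R), open O /\ A = O `&` S2.

Definition cadd {R : realType} (z w : CC R) : CC R := (z.1 + w.1, z.2 + w.2).
Definition csub {R : realType} (z w : CC R) : CC R := (z.1 - w.1, z.2 - w.2).
Definition cmul {R : realType} (z w : CC R) : CC R :=
  (z.1 * w.1 - z.2 * w.2, z.1 * w.2 + z.2 * w.1).
Definition cinv {R : realType} (z : CC R) : CC R :=
  (z.1 / (z.1 ^+ 2 + z.2 ^+ 2), - z.2 / (z.1 ^+ 2 + z.2 ^+ 2)).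
Definition cdiv {R : realType} (z w : CC R) : CC R := cmul z (cinv w).
Definition cpow {R : realType} (z : CC R) (k : nat) : CC R :=
  iter k (cmul z) (1, 0).
Definition cabs {R : realType} (z : CC R) : R := Num.sqrt (z.1 ^+ 2 + z.2 ^+ 2).

(* inverse stereographic projection C -> S^2 \ {N}, N = (0,0,1) *)
Definition stinv {R : realType} (w : CC R) : T3 R :=
  let d := w.1 ^+ 2 + w.2 ^+ 2 + 1 in
  (2 * w.1 / d, 2 * w.2 / d, (w.1 ^+ 2 + w.2 ^+ 2 - 1) / d).

(* the Riemann sphere C u {oo} = option C, identified with S^2 *)
Definition csph {R : realType} (w : option (CC R)) : T3 R :=
  match w with None => (0, 0, 1) | Some w => stinv w end.

Definition winds_once {R : realType} (gam : R -> CC R) :=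
  (forall t, unitI t -> gam t != (0, 0)) /\
  exists theta : R -> R, {within unitI, continuous theta} /\
    (forall t, unitI t ->
       gam t = (cabs (gam t) * cos (theta t), cabs (gam t) * sin (theta t))) /\
    theta 1 - theta 0 = 2 * pi.

(* a planar homeomorphism F on the open set U preserves orientation:
   small positively oriented circles go to loops of winding number +1 *)
Definition orient_pres_plane {R : realType} (U : set (CC R)) (F : CC R -> CC R) :=
  forall p, U p -> exists r0 : R, 0 < r0 /\ forall r, 0 < r < r0 ->
    winds_once (fun t => csub (F (cadd p (r * cos (2 * pi * t), r * sin (2 * pi * t))))
                              (F p)).

(* positively oriented chart of S^2 (orientation induced by stereographic
   projection from the north pole) *)
Definition pos_chart {R : realType} (U : set (T3 R)) (phi : T3 R -> CC R) :=
  ropen U /\ U `<=` S2 /\ open (phi @` U) /\ embedding_on U phi /\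
  orient_pres_plane (stinv @^-1` U) (phi \o stinv).

Definition local_form {R : realType} (f : T3 R -> T3 R) (p : T3 R) (k : nat) :=
  exists (U V : set (T3 R)) (phi psi : T3 R -> CC R),
    pos_chart U phi /\ pos_chart V psi /\ U p /\ phi p = (0, 0) /\
    psi (f p) = (0, 0) /\ f @` U `<=` V /\
    forall x, U x -> psi (f x) = cpow (phi x) k.

Definition branched_cov {R : realType} (f : T3 R -> T3 R) :=
  (forall x, S2 x -> S2 (f x)) /\ {within S2, continuous f} /\
  forall p, S2 p -> exists k, (0 < k)%N /\ local_form f p k.

Definition crit {R : realType} (f : T3 R -> T3 R) : set (T3 R) :=
  [set p | S2 p /\ exists k, (2 <= k)%N /\ local_form f p k].

Definition postcrit {R : realType} (f : T3 R -> T3 R) : set (T3 R) :=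
  closure (\bigcup_(m in [set m : nat | (1 <= m)%N]) (iter m f @` crit f)).

Definition marked {R : realType} (f : T3 R -> T3 R) (X : set (T3 R)) :=
  branched_cov f /\ finite_set (postcrit f) /\
  finite_set X /\ X `<=` S2 /\ postcrit f `<=` X /\ f @` X `<=` X.

Definition arc_param {R : realType} (Y : set (T3 R)) (j : R -> T3 R) :=
  {within unitI, continuous j} /\ (forall t, unitI t -> S2 (j t)) /\
  Y (j 0) /\ Y (j 1) /\ embedding_on openI j /\
  (forall t, openI t -> ~ Y (j t)).

Definition is_arc {R : realType} (Y : set (T3 R)) (l : set (T3 R)) :=
  exists j, arc_param Y j /\ l = j @` unitI.

Definition arc_iso {R : realType} (Y : set (T3 R)) (l l' : set (T3 R)) :=
  exists H : R -> R -> T3 R,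
    {within unitSq, continuous (fun p => H p.1 p.2)} /\
    (forall s, unitI s -> arc_param Y (H s)) /\
    l = H 0 @` unitI /\ l' = H 1 @` unitI.

Definition arc_system {R : realType} (X : set (T3 R)) (L : set (set (T3 R))) :=
  (forall l, L l -> is_arc X l) /\
  (forall l l', L l -> L l' -> arc_iso X l l' -> l = l').

Definition sys_iso {R : realType} (X : set (T3 R)) (L L' : set (set (T3 R))) :=
  (forall l, L l -> exists! l', L' l' /\ arc_iso X l l') /\
  (forall l', L' l' -> exists! l, L l /\ arc_iso X l' l).

(* lift of an arc l of (S^2,X): closure of a component of f^-1(l \ e(l)),
   where e(l) = l `&` X is the set of endpoints of l *)
Definition is_lift {R : realType} (f : T3 R -> T3 R) (X : set (T3 R))
    (l lt : set (T3 R)) :=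
  let A := S2 `&` f @^-1` (l `\` X) in
  exists x, A x /\ lt = closure (connected_component A x).

Definition lift_of_system {R : realType} (f : T3 R -> T3 R) (X : set (T3 R))
    (L0 Lt : set (set (T3 R))) :=
  arc_system X Lt /\ forall lt, Lt lt -> exists l, L0 l /\ is_lift f X l lt.

Definition fwd_invariant {R : realType} (f : T3 R -> T3 R) (X : set (T3 R))
    (L : set (set (T3 R))) :=
  exists L0 Lt, L0 `<=` L /\ lift_of_system f X L0 Lt /\ sys_iso X Lt L.

Definition jordan_curve {R : realType} (G : set (T3 R)) :=
  exists gam : R -> T3 R, {within unitI, continuous gam} /\
    (forall t, unitI t -> S2 (gam t)) /\ gam 0 = gam 1 /\
    inj_on [set t | 0 <= t < 1] gam /\ G = gam @` unitI.

Definition open_jdisc {R : realType} (W : set (T3 R)) :=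
  exists G x, jordan_curve G /\ S2 x /\ ~ G x /\
    W = connected_component (S2 `\` G) x.

Definition closed_disc {R : realType} (D : set (T3 R)) :=
  exists W, open_jdisc W /\ D = closure W.

Definition bdry_open {R : realType} (W : set (T3 R)) := closure W `\` W.
Definition bdry_closed {R : realType} (D : set (T3 R)) := D `\` sInt D.

Definition emb_arc {R : realType} (A : set (T3 R)) (a b : T3 R) :=
  a != b /\ exists j : R -> T3 R, {within unitI, continuous j} /\
    (forall t, unitI t -> S2 (j t)) /\ inj_on unitI j /\
    j 0 = a /\ j 1 = b /\ A = j @` unitI.

Definition arcInt {R : realType} (A : set (T3 R)) (a b : T3 R) :=
  A `\` [set a; b].

Definition blowing_up_conditions {R : realType} (f : T3 R -> T3 R)
    (X alpha : set (T3 R)) (a b : T3 R) :=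
  emb_arc alpha a b /\
  homeo_onto alpha (f @` alpha) f /\
  (exists (L : nat) (al : nat -> set (T3 R)), (0 < L)%N /\
     alpha = \bigcup_(i in [set i : nat | (i < L)%N]) al i /\
     forall i, (i < L)%N -> is_arc (S2 `&` f @^-1` X) (al i)) /\
  arcInt alpha a b `&` (X `|` crit f) = set0.

Definition A1 {R : realType} (z : CC R) : option (CC R) :=
  if z == (1, 0) then None
  else Some (cmul (0, -1) (cdiv (cadd z (1, 0)) (csub z (1, 0)))).
Definition A2 {R : realType} (w : option (CC R)) : option (CC R) :=
  match w with
  | None => Some (1, 0)
  | Some w => if w == (-1, 0) then None
              else Some (cdiv (csub w (1, 0)) (cadd w (1, 0)))
  end.
Definition powo {R : realType} (w : option (CC R)) (m : nat) : option (CC R) :=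
  match w with None => None | Some w => Some (cpow w m) end.
Definition phin {R : realType} (n : nat) (z : CC R) : option (CC R) :=
  A2 (powo (A1 z) (2 * n)).

Definition cdisc {R : realType} : set (CC R) := [set z | z.1 ^+ 2 + z.2 ^+ 2 <= 1].
Definition cdisc_up {R : realType} : set (CC R) :=
  [set z | z.1 ^+ 2 + z.2 ^+ 2 = 1 /\ 0 <= z.2].
Definition cdisc_down {R : realType} : set (CC R) :=
  [set z | z.1 ^+ 2 + z.2 ^+ 2 = 1 /\ z.2 <= 0].
Definition seg {R : realType} : set (T3 R) :=
  [set csph (Some (t, 0)) | t in [set t : R | -1 <= t <= 1]].

Definition blown_up {R : realType} (f : T3 R -> T3 R) (X alpha : set (T3 R))
    (a b : T3 R) (n : nat) (g : T3 R -> T3 R) :=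
  let Ia := arcInt alpha a b in
  exists (W D Dp Dm : set (T3 R)) (c : T3 R -> T3 R) (h : R -> T3 R -> T3 R)
         (h' : T3 R -> T3 R) (h'' : T3 R -> CC R),
  (open_jdisc W /\ Ia `<=` W /\ bdry_open W a /\ bdry_open W b /\
   closure W `&` (S2 `&` f @^-1` X) = alpha `&` (S2 `&` f @^-1` X) /\
   inj_on (closure W) f) /\
  (closed_disc D /\ D `<=` W `|` [set a; b] /\ bdry_closed D a /\
   bdry_closed D b) /\
  ({within [set p | unitI p.1 /\ (S2 `\` Ia) p.2],
       continuous (fun p => h p.1 p.2)} /\
   (forall t, unitI t -> embedding_on (S2 `\` Ia) (h t) /\
                         (h t) @` (S2 `\` Ia) `<=` S2) /\
   (forall x, (S2 `\` Ia) x -> h 0 x = x) /\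
   (forall t x, unitI t -> (S2 `\` Ia) x -> ~ W x -> h t x = x) /\
   (h 1) @` (S2 `\` Ia) = S2 `\` (D `\` [set a; b])) /\
  ({within S2 `\` sInt D, continuous c} /\
   (forall x, (S2 `\` sInt D) x -> S2 (c x)) /\
   (forall x, (S2 `\` sInt D) x -> ~ W x -> c x = x) /\
   (forall x, (S2 `\` Ia) x -> c (h 1 x) = x)) /\
  (* the two boundary arcs of D from a = e_{-1} to b = e_{+1},
     each mapped homeomorphically onto alpha by c *)
  (emb_arc Dp a b /\ emb_arc Dm a b /\ Dp `|` Dm = bdry_closed D /\
   Dp `&` Dm = [set a; b] /\ homeo_onto Dp alpha c /\
   homeo_onto Dm alpha c) /\
  (homeo_onto S2 S2 h' /\ h' @` seg = f @` alpha /\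
   h' (csph (Some (-1, 0))) = f a /\ h' (csph (Some (1, 0))) = f b) /\
  (homeo_onto D cdisc h'' /\
   (forall x, Dp x -> cdisc_up (h'' x) /\
                      h' (csph (phin n (h'' x))) = f (c x)) /\
   (forall x, Dm x -> cdisc_down (h'' x) /\
                      h' (csph (phin n (h'' x))) = f (c x))) /\
  (forall x, (S2 `\` sInt D) x -> g x = f (c x)) /\
  (forall x, D x -> g x = h' (csph (phin n (h'' x)))).

From Pilot Require Import Defs.
From mathcomp Require Import all_boot all_order all_algebra.
From mathcomp Require Import all_classical all_reals all_analysis.
From mathcomp Require Import lra.
Import Order.TTheory GRing.Theory Num.Theory.
Import numFieldTopology.Exports numFieldNormedType.Exports.
Local Open Scope classical_set_scope.
Local Open Scope ring_scope.

(* The lifts in [Lt] avoid Int(alpha), so they lie in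
   E = S^2 \ Int(alpha), on which g o h_1 = f o c o h_1 = f.  The end h_1 of
   the isotopy is a homeomorphism of E onto S^2 \ (D \ {a, b}) with continuous
   inverse c, and the endpoints a, b are mapped by f into X, so no component of
   f^-1(l \ X) passes through them.  Since l \ X contains no critical value,
   such a component is relatively open, and h_1 carries it onto a component of
   g^-1(l \ X); taking closures, h_1 maps each f-lift in [Lt] onto a g-lift of
   the same arc.  Finally h_1 is isotopic to the identity relative to X, so
   h_1(Lt) is an arc system isotopic to Lt, hence to Lambda. *)

Lemma within_continuousP {T U : topologicalType} (A : set T) (f : T -> U) :
  {within A, continuous f} <->
  (forall x, A x -> forall B, nbhs (f x) B -> nbhs x (fun y => A y -> B (f y))).
Proof. by rewrite subspace_continuousP; split => cf x Ax B; apply: cf. Qed.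

Lemma within_continuous_nbhs {T U : topologicalType} {A : set T} {f : T -> U}
    {x : T} {B : set U} :
  {within A, continuous f} -> A x -> nbhs (f x) B ->
  exists O, [/\ open O, O x & forall y, A y -> O y -> B (f y)].
Proof.
move=> /within_continuousP cf Ax /(cf x Ax); rewrite nbhsE => -[N [oN Nx] NB].
by exists N; split => // y Ay Ny; exact: NB.
Qed.

Lemma continuous_within_comp {T U V : topologicalType} {A : set T} {B : set U}
    {f : T -> U} {g : U -> V} :
  {within A, continuous f} -> {within B, continuous g} ->
  (forall x, A x -> B (f x)) -> {within A, continuous (g \o f)}.
Proof.
move=> /within_continuousP cf /within_continuousP cg AB.
apply/within_continuousP => x Ax C /(cg _ (AB _ Ax)) /(cf _ Ax).
by apply: filterS => y BC Ay; exact: BC (AB _ Ay).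
Qed.

Lemma continuous_within_pair {T U V : topologicalType} {A : set T}
    {f : T -> U} {g : T -> V} :
  {within A, continuous f} -> {within A, continuous g} ->
  {within A, continuous (fun x => (f x, g x))}.
Proof.
rewrite !subspace_continuousP => cf cg x Ax.
exact: cvg_pair (cf x Ax) (cg x Ax).
Qed.

Lemma continuous_within_eq {T U : topologicalType} {A : set T} {f g : T -> U} :
  {within A, continuous f} -> (forall x, A x -> f x = g x) ->
  {within A, continuous g}.
Proof. by move=> cf fg; apply: subspace_eq_continuous cf => x /set_mem /fg. Qed.

Lemma connected_closure_between {T : topologicalType} {K M : set T} :
  connected K -> K `<=` M -> M `<=` closure K -> connected M.
Proof.
move=> cK KM Mcl B [m Bm] [C1 oC1 B1] [C2 cC2 B2].
have BM : B `<=` M by rewrite B1 => y [].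
have traceK (C : set T) : B = M `&` C -> K `&` B = K `&` C.
  by move=> ->; rewrite setIA (setIidl KM).
have KB : K `<=` B.
  apply/setIidPl/cK.
  - have C1m : C1 m by move: Bm; rewrite B1 => -[].
    have [y [Ky C1y]] := Mcl m (BM m Bm) C1 (open_nbhs_nbhs (conj oC1 C1m)).
    by exists y; split => //; rewrite B1; split => //; exact: KM.
  - by exists C1 => //; exact: traceK.
  - by exists C2 => //; exact: traceK.
have KC2 : K `<=` C2 by move=> y /KB; rewrite B2 => -[].
have clKC2 : closure K `<=` C2 by move=> z /(closureS KC2) /cC2.
apply/seteqP; split => // y My; rewrite B2; split => //.
exact/clKC2/Mcl.
Qed.

Lemma connected_component_closure {T : topologicalType} (A : set T) x p :
  closure (connected_component A x) p -> A p -> connected_component A x p.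
Proof.
move=> clp Ap.
have Ax : A x.
  have [y [Ky _]] := clp setT filterT.
  by case: Ky => C [Cx CA _] _; exact: CA.
apply: (connected_component_max (B := connected_component A x `|` [set p])).
- by left; exact: connected_component_refl.
- by move=> y [/connected_component_sub|->].
- apply: (connected_closure_between (K := connected_component A x)).
  + exact: component_connected.
  + by move=> y Ky; left.
  + by move=> y [/subset_closure|->].
- by right.
Qed.

Lemma unitIE {R : realType} : (@unitI R) = `[0, 1]%classic.
Proof. by rewrite set_itvcc. Qed.

Lemma openIE {R : realType} : (@Defs.openI R) = `]0, 1[%classic.
Proof. by rewrite set_itvoo. Qed.

Lemma unitIP {R : realType} (s : R) : unitI s <-> 0 <= s /\ s <= 1.
Proof. by rewrite /unitI /=; split => [/andP[]|[-> ->]]. Qed.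

Lemma unitI0 {R : realType} : unitI (0 : R).
Proof. by apply/unitIP; split; lra. Qed.

Lemma unitI1 {R : realType} : unitI (1 : R).
Proof. by apply/unitIP; split; lra. Qed.

Lemma unitI_compact {R : realType} : compact (@unitI R).
Proof. by rewrite unitIE; exact: segment_compact. Qed.

Lemma openI_open {R : realType} : open (@Defs.openI R).
Proof. by rewrite openIE; exact: itv_open. Qed.

Lemma openI_unitI {R : realType} {x : R} : Defs.openI x -> unitI x.
Proof. by rewrite /Defs.openI unitIP /= => /andP[? ?]; split; lra. Qed.

Lemma unitI_openI {R : realType} (t : R) :
  unitI t -> t <> 0 -> t <> 1 -> Defs.openI t.
Proof.
rewrite unitIP /Defs.openI /= => -[t0 t1] n0 n1.
rewrite !lt_neqAle t0 t1 !andbT.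
by apply/andP; split; apply/eqP => e; [apply: n0|apply: n1].
Qed.

(* Compactness of [0, 1] makes the inverse of a parametrisation continuous
   wherever the parametrisation is injective. *)
Lemma param_ball_nbhs {R : realType} {j : R -> T3 R} {t0 e : R} :
  {within unitI, continuous j} -> 0 < e ->
  (forall s, unitI s -> j s = j t0 -> ball t0 e s) ->
  exists O, [/\ open O, O (j t0) & forall s, unitI s -> O (j s) -> ball t0 e s].
Proof.
move=> cj e0 jt0.
set B := unitI `&` ~` ball t0 e.
have cB : compact B.
  by apply: compact_closedI; [exact: unitI_compact|exact/open_closedC/ball_open].
have cjB : compact (j @` B).
  exact: continuous_compact (continuous_subspaceW (@subIsetl _ _ _) cj) cB.
exists (~` (j @` B)); split.
- exact/closed_openC/(compact_closed (@norm_hausdorff _ _)).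
- by move=> [s [Is nb] js]; apply: nb; exact: jt0.
- by move=> s Is Os; apply: contrapT => nb; apply: Os; exists s.
Qed.

Lemma continuous_inj_no_interior_extremum {R : realType} {u : R -> R} {t0 : R} :
  {within Defs.openI, continuous u} -> inj_on Defs.openI u -> Defs.openI t0 ->
  exists s1 s2, [/\ Defs.openI s1, Defs.openI s2 & u s1 < u t0 < u s2].
Proof.
rewrite openIE => cu iu t0I.
pose s1 := t0 / 2; pose s2 := (t0 + 1) / 2.
have : [/\ s1 \in `]0, 1[, s2 \in `]0, 1[ & s1 < t0 < s2].
  move: t0I => /=; rewrite !in_itv /= => /andP[? ?].
  by split; try apply/andP; split; rewrite /s1 /s2; lra.
move=> [s1I s2I /andP[s1t0 t0s2]].
have [mono|mono] := itv_continuous_inj_mono cu (fun x y xI yI => iu x y xI yI).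
- by exists s1, s2; split => //; rewrite !mono.
- by exists s2, s1; split => //; rewrite !mono.
Qed.

Lemma embedded_param_factor {R : realType} {j k : R -> T3 R} :
  {within unitI, continuous j} -> inj_on unitI j ->
  {within unitI, continuous k} -> k @` unitI `<=` j @` unitI ->
  exists u : R -> R, [/\ {within unitI, continuous u},
    forall s, unitI s -> unitI (u s) & forall s, unitI s -> j (u s) = k s].
Proof.
move=> cj injj ck kj.
have ex s : exists r, unitI s -> unitI r /\ j r = k s.
  have [sI|] := pselect (unitI s); last by exists 0.
  by have [r rI jr] := kj _ (ex_intro2 _ _ s sI erefl); exists r.
have [u uP] := choice ex.
have uI s : unitI s -> unitI (u s) by move=> /uP [].
have uE s : unitI s -> j (u s) = k s by move=> /uP [].
exists u; split => //; apply/within_continuousP => s sI B /nbhs_ballP [e e0 eB].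
have [N [oN Nu NP]] := @param_ball_nbhs R j (u s) e cj e0 (fun r rI jr =>
  eq_ind_r (ball (u s) e) (ballxx (u s) e0) (injj _ _ rI (uI s sI) jr) : ball (u s) e r).
rewrite (uE s sI) in Nu.
have [M [oM Ms MP]] := within_continuous_nbhs ck sI (open_nbhs_nbhs (conj oN Nu)).
apply: filterS (open_nbhs_nbhs (conj oM Ms)) => s' Ms' s'I.
by apply/eB/NP; [exact: uI|rewrite uE //; exact: MP].
Qed.

(* Otherwise [j r] is an interior point of one of the pieces, and the
   reparametrisation of that piece along [j] would attain an extremum at an
   interior point. *)
Lemma arc_union_endpoint {R : realType} {I : Type} {P : set I} {Y : set (T3 R)}
    {al : I -> set (T3 R)} {j : R -> T3 R} :
  {within unitI, continuous j} -> inj_on unitI j ->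
  j @` unitI = \bigcup_(i in P) al i -> (forall i, P i -> is_arc Y (al i)) ->
  forall r, r = 0 \/ r = 1 -> Y (j r).
Proof.
move=> cj injj jA arcs r r01.
have rI : unitI r by case: r01 => ->; [exact: unitI0|exact: unitI1].
have : (j @` unitI) (j r) by exists r.
rewrite jA => -[i Pi].
have [ji [[cji [_ [Y0 [Y1 [[injji _] _]]]]] alE]] := arcs i Pi.
rewrite alE => -[t0 t0I jit0].
have [e0|n0] := pselect (t0 = 0); first by rewrite -jit0 e0.
have [e1|n1] := pselect (t0 = 1); first by rewrite -jit0 e1.
have t0O := unitI_openI t0 t0I n0 n1.
have jij : ji @` unitI `<=` j @` unitI.
  by rewrite jA => _ [s sI <-]; exists i => //; rewrite alE; exists s.
have [u [cu uI uE]] := embedded_param_factor cj injj cji jij.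
have ut0 : u t0 = r by apply: injj => //; [exact: uI|rewrite uE].
have uinj : inj_on Defs.openI u.
  move=> s1 s2 s1O s2O e; apply: injji => //.
  by rewrite -(uE s1 (openI_unitI s1O)) -(uE s2 (openI_unitI s2O)) e.
have cuO := continuous_subspaceW (@openI_unitI R) cu.
have [s1 [s2 [s1O s2O]]] := continuous_inj_no_interior_extremum cuO uinj t0O.
have /unitIP[u10 u11] := uI _ (openI_unitI s1O).
have /unitIP[u20 u21] := uI _ (openI_unitI s2O).
rewrite ut0 => /andP[]; case: r01 => -> lt1 lt2.
- by move: lt1; rewrite ltNge u10.
- by move: lt2; rewrite ltNge u21.
Qed.

Lemma cpow1 {R : realType} (z : CC R) : cpow z 1 = z.
Proof. by case: z => x y; rewrite /cpow /cmul /= !mulr1 !mulr0 subr0 add0r. Qed.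

Lemma marked_local_form1 {R : realType} {f : T3 R -> T3 R} {X : set (T3 R)} {k : T3 R} :
  marked f X -> S2 k -> ~ X (f k) -> local_form f k 1.
Proof.
move=> [[_ [_ fl]] [_ [_ [_ [PX _]]]]] Sk nXfk.
have [kk [kk0 lf]] := fl k Sk.
case: kk kk0 lf => [|[|m]] // _ lf.
exfalso; apply/nXfk/PX/subset_closure.
by exists 1%N => //; exists k => //; split => //; exists m.+2.
Qed.

Lemma local_homeo_path_lift {R : realType} {f : T3 R -> T3 R} {k : T3 R}
    {j : R -> T3 R} {t0 : R} :
  local_form f k 1 -> {within unitI, continuous j} ->
  (forall t, unitI t -> S2 (j t)) -> Defs.openI t0 -> j t0 = f k ->
  exists (d : R) (U : set (T3 R)) (sig : R -> T3 R),
    [/\ 0 < d, {within ball t0 d, continuous sig},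
     forall s, ball t0 d s -> [/\ Defs.openI s, S2 (sig s) & f (sig s) = j s],
     open_nbhs k U &
     forall s w, ball t0 d s -> U w -> S2 w -> f w = j s -> sig s = w].
Proof.
move=> [U [V [phi [psi [pcU [pcV [Uk [_ [_ [fUV fU]]]]]]]]]] cj Sj t0O jt0.
case: pcU => [[OU [oOU UE]] [US [ophiU [[_ [_ [Gphi [cGphi GphiK]]]] _]]]].
case: pcV => [[OV [oOV VE]] [_ [_ [[injpsi [cpsi _]] _]]]].
have psif y : U y -> psi (f y) = phi y by move=> Uy; rewrite fU // cpow1.
have Vfk : V (f k) by apply: fUV; exists k.
have phiUk : (phi @` U) (psi (j t0)) by rewrite jt0 psif //; exists k.
have Vjt0 : V (j t0) by rewrite jt0.
have [Q [oQ Qjt0 QP]] := within_continuous_nbhs cpsi Vjt0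
  (open_nbhs_nbhs (conj ophiU phiUk)).
have OVjt0 : OV (j t0) by move: Vfk; rewrite -jt0 VE => -[].
have cjt0 := (within_continuousP _ _).1 cj t0 (openI_unitI t0O).
have near_t0 : nbhs t0 (fun s => Defs.openI s /\ V (j s) /\ (phi @` U) (psi (j s))).
  apply: filterS (filterI (open_nbhs_nbhs (conj openI_open t0O))
    (filterI (cjt0 _ (open_nbhs_nbhs (conj oOV OVjt0)))
             (cjt0 _ (open_nbhs_nbhs (conj oQ Qjt0))))).
  move=> s [sO [OVjs Qjs]]; have sI := openI_unitI sO.
  have Vjs : V (j s) by rewrite VE; split; [exact: OVjs|exact: Sj].
  by split; [|split; [|exact: QP (Qjs sI)]].
have [d /= d0 dP] := (nbhs_ballP _ _).1 near_t0.
exists d, OU, (Gphi \o psi \o j); split => //.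
- apply: (continuous_within_comp (B := phi @` U)) cGphi _; last by move=> s /dP [_ []].
  apply: (continuous_within_comp (B := V)) cpsi _; last by move=> s /dP [_ []].
  by apply: continuous_subspaceW cj => s /dP [/openI_unitI].
- move=> s /dP [sO [Vjs [u Uu phiu]]].
  have fuj : f u = j s by apply: injpsi => //; [apply: fUV; exists u|rewrite psif].
  by rewrite /= -phiu GphiK // -fuj; split => //; exact: US.
- by split => //; move: Uk; rewrite UE => -[].
- move=> s w _ OUw Sw fw; have Uw : U w by rewrite UE.
  by rewrite /= -fw psif // GphiK.
Qed.

(* Near [k] the component contains the image of a local lift of the arc through
   [k], which exists because [k] is not critical (critical values lie in [X]). *)
Lemma lift_component_locally_open {R : realType} {f : T3 R -> T3 R}
    {X l : set (T3 R)} {x k : T3 R} :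
  marked f X -> is_arc X l ->
  connected_component (S2 `&` f @^-1` (l `\` X)) x k ->
  exists O, [/\ open O, O k & forall w, O w ->
     (S2 `&` f @^-1` (l `\` X)) w ->
     connected_component (S2 `&` f @^-1` (l `\` X)) x w].
Proof.
move=> mf [j [[cj [Sj [Xj0 [Xj1 [[injj _] jnX]]]]] lE]] Kk.
set A := S2 `&` f @^-1` (l `\` X).
have [Sk [lfk nXfk]] : A k := connected_component_sub Kk.
move: lfk; rewrite lE => -[t0 t0I jt0].
have t0O : Defs.openI t0.
  by apply: unitI_openI => // e; apply: nXfk; rewrite -jt0 e.
have [d [U [sig [d0 csig sigP [oU Uk] sigU]]]] :=
  local_homeo_path_lift (marked_local_form1 mf Sk nXfk) cj Sj t0O jt0.
have sigt0 : sig t0 = k by apply: sigU => //; exact: ballxx.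
have sigA : sig @` ball t0 d `<=` A.
  move=> _ [s /sigP [sO Ss fs] <-]; split => //.
  rewrite /preimage /= fs; split; last exact: jnX.
  by rewrite lE; exists s => //; exact: openI_unitI.
have sigK : sig @` ball t0 d `<=` connected_component A x.
  move=> y ys; apply: (connected_component_trans Kk); rewrite -sigt0.
  apply: connected_component_max ys => //; first by exists t0 => //; exact: ballxx.
  apply: connected_continuous_connected csig.
  by apply/connected_intervalP; rewrite ball_itv; exact: interval_is_interval.
have jt0_only s : unitI s -> j s = j t0 -> ball t0 d s.
  move=> sI e; have [s0|n0] := pselect (s = 0).
    by exfalso; apply: nXfk; rewrite -jt0 -e s0.
  have [s1|n1] := pselect (s = 1).
    by exfalso; apply: nXfk; rewrite -jt0 -e s1.
  by rewrite (injj _ _ (unitI_openI s sI n0 n1) t0O e); exact: ballxx.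
have [N [oN Nk NP]] := param_ball_nbhs cj d0 jt0_only.
rewrite jt0 in Nk.
have [cf _] := (mf.1).2.
have [M [oM Mk MP]] := within_continuous_nbhs cf Sk (open_nbhs_nbhs (conj oN Nk)).
exists (U `&` M); split; [exact: openI|by []|].
move=> w [Uw Mw] [Sw [lfw _]]; move: lfw; rewrite lE => -[s sI jsfw].
have bs : ball t0 d s by apply: NP => //; rewrite jsfw; exact: MP.
by apply: sigK; exists s => //; exact: sigU.
Qed.

Lemma continuous_affine_fst {R : realType} (a b : R) :
  continuous (fun p : R * R => (a * p.1 + b, p.2)).
Proof.
move=> p.
have c1 : (fun q : R * R => a * q.1 + b) x @[x --> p] --> a * p.1 + b.
  by apply: cvgD; [apply: cvgM; [exact: cvg_cst|exact: cvg_fst]|exact: cvg_cst].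
exact: cvg_pair c1 cvg_snd.
Qed.

Lemma closed_setX {T U : topologicalType} (A : set T) (B : set U) :
  closed A -> closed B -> closed (A `*` B).
Proof.
move=> cA cB; rewrite -[X in closed X]/(fst @^-1` A `&` snd @^-1` B).
apply: closedI.
- by apply: (continuous_closedP _).1 cA => -[? ?]; exact: cvg_fst.
- by apply: (continuous_closedP _).1 cB => -[? ?]; exact: cvg_snd.
Qed.

Lemma is_arc_sub_S2 {R : realType} {Y l : set (T3 R)} : is_arc Y l -> l `<=` S2.
Proof. by move=> [j [[_ [Sj _]] ->]] _ [t /Sj ? <-]. Qed.

Definition arc_isotopy {R : realType} (X : set (T3 R)) (H : R -> R -> T3 R) :=
  {within unitSq, continuous (fun p : R * R => H p.1 p.2)} /\
  (forall s, unitI s -> arc_param X (H s)).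

Lemma arc_isoP {R : realType} (X l l' : set (T3 R)) :
  arc_iso X l l' <->
  exists H, [/\ arc_isotopy X H, l = H 0 @` unitI & l' = H 1 @` unitI].
Proof.
split => [[H [cH [aH [-> ->]]]]|[H [[cH aH] -> ->]]]; last by exists H.
by exists H; split.
Qed.

Lemma arc_isotopy_rev {R : realType} {X : set (T3 R)} {H} :
  arc_isotopy X H -> arc_isotopy X (fun s => H (1 - s)).
Proof.
move=> [cH aH]; split.
- have flip (p : R * R) : unitSq p -> unitSq (-1 * p.1 + 1, p.2).
    by move: p => [p1 p2]; rewrite /unitSq /= !unitIP => -[? ?]; split => //; lra.
  apply: (continuous_within_eq (continuous_within_comp
    (continuous_subspaceT (continuous_affine_fst (-1) 1)) cH flip)).
  by move=> p _ /=; rewrite mulN1r addrC.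
- by move=> s /unitIP sI; apply: aH; apply/unitIP; lra.
Qed.

Definition isotopy_cat {R : realType} (H1 H2 : R -> R -> T3 R) : R -> R -> T3 R :=
  fun s => if s <= 1/2 then H1 (2 * s) else H2 (2 * s - 1).

Lemma isotopy_cat0 {R : realType} (H1 H2 : R -> R -> T3 R) :
  isotopy_cat H1 H2 0 = H1 0.
Proof. by rewrite /isotopy_cat mulr0 ifT //; lra. Qed.

Lemma isotopy_cat1 {R : realType} (H1 H2 : R -> R -> T3 R) :
  isotopy_cat H1 H2 1 = H2 1.
Proof. by rewrite /isotopy_cat ifF; [congr H2; lra|apply/negbTE; rewrite -ltNge; lra]. Qed.

Lemma arc_isotopy_cat {R : realType} {X : set (T3 R)} {H1 H2} :
  arc_isotopy X H1 -> arc_isotopy X H2 -> (forall t, unitI t -> H1 1 t = H2 0 t) ->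
  arc_isotopy X (isotopy_cat H1 H2).
Proof.
move=> [c1 a1] [c2 a2] H12; split.
- pose SA := [set p : R * R | `[0, 1/2]%classic p.1 /\ `[0, 1]%classic p.2].
  pose SB := [set p : R * R | `[1/2, 1]%classic p.1 /\ `[0, 1]%classic p.2].
  have -> : unitSq = SA `|` SB.
    apply/seteqP; split => -[p1 p2]; rewrite /SA /SB /unitSq /= !in_itv /= !unitIP.
      move=> [[? ?] [? ?]]; have [?|?] := lerP p1 (1/2).
        by left; split; apply/andP; split.
      by right; split; apply/andP; split => //; lra.
    by case=> -[/andP[? ?] /andP[? ?]]; split; split => //; lra.
  apply: withinU_continuous; try by apply: closed_setX; exact: itv_closed.
  + have SAS (p : R * R) : SA p -> unitSq (2 * p.1 + 0, p.2).
      move: p => [p1 p2]; rewrite /SA /unitSq /= !in_itv /= !unitIP.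
      by move=> [/andP[? ?] /andP[? ?]]; split; split => //; lra.
    apply: (continuous_within_eq (continuous_within_comp
      (continuous_subspaceT (continuous_affine_fst 2 0)) c1 SAS)).
    by move=> p [/= + _]; rewrite in_itv /= addr0 /isotopy_cat => /andP[_ ->].
  + have SBS (p : R * R) : SB p -> unitSq (2 * p.1 + -1, p.2).
      move: p => [p1 p2]; rewrite /SB /unitSq /= !in_itv /= !unitIP.
      by move=> [/andP[? ?] /andP[? ?]]; split; split => //; lra.
    apply: (continuous_within_eq (continuous_within_comp
      (continuous_subspaceT (continuous_affine_fst 2 (-1))) c2 SBS)).
    move=> [p1 p2] [/= + p2I]; rewrite in_itv /isotopy_cat /= => /andP[? ?].
    case: ifP => // half; have -> : 2 * p1 + -1 = 0 by lra.
    rewrite -H12; [congr H1; lra|by move: p2I; rewrite in_itv /= unitIP => /andP].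
- move=> s /unitIP [? ?]; rewrite /isotopy_cat; case: ifPn => half.
    by apply: a1; apply/unitIP; lra.
  by apply: a2; apply/unitIP; move: half; rewrite -ltNge => ?; lra.
Qed.

Lemma arc_iso_sym {R : realType} {X l l' : set (T3 R)} :
  arc_iso X l l' -> arc_iso X l' l.
Proof.
move=> /arc_isoP [H [iH -> ->]]; apply/arc_isoP.
exists (fun s => H (1 - s)).
by split; [exact: arc_isotopy_rev|rewrite /= subr0|rewrite /= subrr].
Qed.

Lemma arc_param_embedding {R : realType} {X A : set (T3 R)} {F G : T3 R -> T3 R}
    {j : R -> T3 R} :
  arc_param X j -> (forall t, unitI t -> A (j t)) ->
  {within A, continuous F} -> {within F @` A, continuous G} ->
  (forall y, A y -> G (F y) = y) -> (forall y, A y -> S2 (F y)) ->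
  (forall x, X x -> F x = x) -> (forall y, A y -> X (F y) -> X y) ->
  arc_param X (F \o j).
Proof.
move=> [cj [_ [Xj0 [Xj1 [[_ [_ [Gj [cGj GjK]]]] jnX]]]]] jA cF cG GF SF FX FXX.
have jAO t : Defs.openI t -> A (j t) by move/openI_unitI; exact: jA.
have cFj : {within unitI, continuous (F \o j)} by exact: continuous_within_comp cj cF jA.
split => //; split; [|split; [|split; [|split]]].
- by move=> t /jA /SF.
- by rewrite /= FX.
- by rewrite /= FX.
- split.
    move=> t1 t2 t1O t2O /= e.
    by rewrite -(GjK t1 t1O) -(GjK t2 t2O) -(GF _ (jAO _ t1O)) e GF //; exact: jAO.
  split; first exact: continuous_subspaceW (@openI_unitI R) cFj.
  exists (Gj \o G); split.
    apply: (continuous_within_comp (B := j @` Defs.openI) _ cGj).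
      by apply: continuous_subspaceW cG => _ [t tO <-]; exists (j t) => //; exact: jAO.
    by move=> _ [t tO <-]; exists t => //; rewrite /= GF //; exact: jAO.
  by move=> t tO /=; rewrite GF ?GjK //; exact: jAO.
- by move=> t tO /= /(FXX _ (jAO _ tO)); exact: jnX.
Qed.

Section ambient_isotopy.
Context {R : realType} {X E : set (T3 R)} {h : R -> T3 R -> T3 R}.
Hypothesis h_cont :
  {within [set p | unitI p.1 /\ E p.2], continuous (fun p => h p.1 p.2)}.
Hypothesis h_emb :
  forall t, unitI t -> embedding_on E (h t) /\ h t @` E `<=` S2.
Hypothesis h0 : forall x, E x -> h 0 x = x.
Hypothesis h_fixX : forall t x, unitI t -> X x -> h t x = x.
Hypothesis XE : X `<=` E.

Lemma arc_isotopy_ambient {j : R -> T3 R} :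
  arc_param X j -> (forall t, unitI t -> E (j t)) ->
  arc_isotopy X (fun s t => h s (j t)).
Proof.
move=> aj jE; split.
- have inner : {within unitSq, continuous (fun p : R * R => (p.1, j p.2))}.
    apply: continuous_within_pair.
      by apply: continuous_subspaceT => -[? ?]; exact: cvg_fst.
    apply: (continuous_within_comp (B := unitI)) aj.1 _ => [|p []//].
    by apply: continuous_subspaceT => -[? ?]; exact: cvg_snd.
  by apply: (continuous_within_comp inner h_cont) => p [p1I p2I]; split => //; exact: jE.
- move=> s sI; have [[injh [ch [Gh [cGh GhK]]]] hS] := h_emb s sI.
  apply: (arc_param_embedding (F := h s) aj jE ch cGh GhK _ (h_fixX s ^~ sI)).
  + by move=> y Ey; apply: hS; exists y.
  + move=> y Ey Xhy; suff <- : h s y = y by [].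
    by apply: injh; [exact: XE|exact: Ey|rewrite h_fixX].
Qed.

Lemma is_arc_ambient {l : set (T3 R)} :
  l `<=` E -> is_arc X l -> is_arc X (h 1 @` l).
Proof.
move=> lE [j [aj lj]]; subst l.
have jE t : unitI t -> E (j t) by move=> tI; apply: lE; exists t.
have [_ ahj] := arc_isotopy_ambient aj jE.
exists (fun t => h 1 (j t)); split; first exact: ahj 1 unitI1.
by rewrite image_comp.
Qed.

Lemma arc_iso_ambient {l l' : set (T3 R)} :
  l `<=` E -> arc_iso X l l' -> arc_iso X (h 1 @` l) l'.
Proof.
move=> lE /arc_isoP [H [iH lH ->]]; apply/arc_isoP.
have jE t : unitI t -> E (H 0 t) by move=> tI; apply: lE; rewrite lH; exists t.
have iHr := arc_isotopy_rev (arc_isotopy_ambient (proj2 iH 0 unitI0) jE).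
exists (isotopy_cat (fun s t => h (1 - s) (H 0 t)) H); split.
- apply: arc_isotopy_cat iHr iH _ => t tI /=.
  by rewrite subrr h0 //; exact: jE.
- by rewrite isotopy_cat0 lH image_comp subr0.
- by rewrite isotopy_cat1.
Qed.

Context {c : T3 R -> T3 R}.
Hypothesis c_cont : {within h 1 @` E, continuous c}.
Hypothesis cK : forall y, E y -> c (h 1 y) = y.
Hypothesis c_fixX : forall x, X x -> c x = x.
Hypothesis ES : E `<=` S2.

Lemma arc_param_inverse {j : R -> T3 R} :
  arc_param X j -> (forall t, unitI t -> (h 1 @` E) (j t)) ->
  arc_param X (c \o j) /\ forall t, unitI t -> E (c (j t)) /\ h 1 (c (j t)) = j t.
Proof.
move=> aj jE.
have h1c y : (h 1 @` E) y -> E (c y) /\ h 1 (c y) = y by move=> [z Ez <-]; rewrite cK.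
split; last by move=> t /jE /h1c.
have [[_ [ch1 _]] _] := h_emb 1 unitI1.
apply: (arc_param_embedding aj jE c_cont _ (fun y Ay => (h1c y Ay).2) _ c_fixX).
- by apply: continuous_subspaceW ch1 => _ [y /h1c[Ecy _] <-].
- by move=> y /h1c[/ES].
- by move=> y /h1c[_ hy] Xc; rewrite -hy h_fixX //; exact: unitI1.
Qed.

Lemma arc_iso_ambient_inv {l l' : set (T3 R)} :
  l `<=` E -> arc_iso X (h 1 @` l) l' -> arc_iso X l l'.
Proof.
move=> lE /arc_isoP [H [iH lH ->]]; apply/arc_isoP.
have jE t : unitI t -> (h 1 @` E) (H 0 t).
  move=> tI; have : (H 0 @` unitI) (H 0 t) by exists t.
  by rewrite -lH => -[y ly <-]; exists y => //; exact: lE.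
have [pc cjE] := arc_param_inverse (proj2 iH 0 unitI0) jE.
exists (isotopy_cat (fun s t => h s ((c \o H 0) t)) H); split.
- apply: arc_isotopy_cat (arc_isotopy_ambient pc (fun t tI => (cjE t tI).1)) iH _.
  by move=> t tI; exact: (cjE t tI).2.
- rewrite isotopy_cat0; apply/seteqP; split.
    move=> y ly; have : (H 0 @` unitI) (h 1 y) by rewrite -lH; exists y.
    case=> t tI et; exists t => //=; rewrite h0; last exact: (cjE t tI).1.
    by rewrite et cK //; exact: lE.
  move=> _ [t tI <-] /=; rewrite h0; last exact: (cjE t tI).1.
  have : (H 0 @` unitI) (H 0 t) by exists t.
  by rewrite -lH => -[z lz <-]; rewrite cK //; exact: lE.
- by rewrite isotopy_cat1.
Qed.

Lemma arc_iso_ambientE {l l' : set (T3 R)} :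
  l `<=` E -> arc_iso X (h 1 @` l) l' <-> arc_iso X l l'.
Proof. by move=> lE; split; [exact: arc_iso_ambient_inv|exact: arc_iso_ambient]. Qed.

End ambient_isotopy.

Section lift_transport.
Context {R : realType} {f g h1 c : T3 R -> T3 R} {X E D : set (T3 R)} {a b : T3 R}.
Hypotheses (mf : marked f X) (ES : E `<=` S2).
Hypotheses (h1_cont : {within E, continuous h1}) (h1_inj : inj_on E h1).
Hypothesis h1_img : forall y, E y -> S2 (h1 y) /\ ~ (D `\` [set a; b]) (h1 y).
Hypothesis h1_onto : forall z, S2 z -> ~ D z -> exists2 y, E y & h1 y = z.
Hypotheses (cK : forall y, E y -> c (h1 y) = y)
  (c_cont : {within S2 `\` sInt D, continuous c}).
Hypothesis gE : forall y, E y -> g (h1 y) = f y.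
Hypothesis D_closed : closed D.
Hypotheses (h1a : h1 a = a) (h1b : h1 b = b) (Ea : E a) (Eb : E b).
Hypotheses (Xfa : X (f a)) (Xfb : X (f b)).

Context {l : set (T3 R)}.
Hypothesis arc_l : is_arc X l.
Local Notation Af := (S2 `&` f @^-1` (l `\` X)).
Local Notation Ag := (S2 `&` g @^-1` (l `\` X)).

Lemma lift_set_transport {y} : E y -> Ag (h1 y) <-> Af y.
Proof.
move=> Ey; rewrite /preimage /= gE //.
by split => -[_ ?]; split => //; [exact: ES|exact: (h1_img _ Ey).1].
Qed.

Lemma lift_set_off_D {y} : E y -> Af y -> ~ D (h1 y).
Proof.
move=> Ey [_ [_ nXfy]] Dy; have [_ nDab] := h1_img _ Ey.
have [[ya|yb]|] := pselect ([set a; b] (h1 y)); last by move=> nab; apply: nDab.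
- by apply: nXfy; rewrite (h1_inj _ _ Ey Ea (etrans ya (esym h1a))).
- by apply: nXfy; rewrite (h1_inj _ _ Ey Eb (etrans yb (esym h1b))).
Qed.

Section component.
Context {x : T3 R}.
Local Notation K := (connected_component Af x).
Local Notation K' := (connected_component Ag (h1 x)).
Hypothesis KE : K `<=` E.

(* Off [D], [c] is a continuous inverse of [h1]. *)
Lemma image_component_locally_open {y} : K y ->
  exists V, [/\ open V, V (h1 y) & V `&` Ag `<=` h1 @` K].
Proof.
move=> Ky; have Ey := KE _ Ky.
have nDy := lift_set_off_D Ey (connected_component_sub Ky).
have [N [oN Ny NP]] := lift_component_locally_open mf arc_l Ky.
have Sy : (S2 `\` sInt D) (h1 y) by split; [exact: (h1_img _ Ey).1|case=> /nDy].
have Ncy : N (c (h1 y)) by rewrite cK.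
have [M [oM My MP]] := within_continuous_nbhs c_cont Sy (open_nbhs_nbhs (conj oN Ncy)).
exists (M `&` ~` D); split => //; first exact/openI/closed_openC.
move=> z [[Mz nDz] Agz]; have [w Ew hw] := h1_onto _ Agz.1 nDz.
have Sz : S2 z := Agz.1.
have Nw : N w by rewrite -(cK _ Ew) hw; apply: MP Mz; split => //; case=> /nDz.
by exists w => //; apply: NP Nw _; apply/(lift_set_transport Ew); rewrite hw.
Qed.

Lemma image_component_sub : Af x -> h1 @` K `<=` K'.
Proof.
move=> Afx; apply: connected_component_max.
- by exists x => //; exact: connected_component_refl.
- move=> _ [y Ky <-]; apply/(lift_set_transport (KE _ Ky)).
  exact: connected_component_sub Ky.
- apply: connected_continuous_connected; first exact: component_connected.
  exact: continuous_subspaceW KE h1_cont.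
Qed.

Context {lt : set (T3 R)}.
Hypotheses (ltK : lt = closure K) (ltE : lt `<=` E).

Lemma image_lift_component : Af x -> closed (h1 @` lt) -> h1 @` K = K'.
Proof.
move=> Afx lt_closed; have KK' := image_component_sub Afx.
apply: (@component_connected _ Ag (h1 x) (h1 @` K)).
- by exists (h1 x); exists x => //; exact: connected_component_refl.
- exists (\bigcup_(V in [set V | open V /\ V `&` Ag `<=` h1 @` K]) V).
    by apply: bigcup_open => V [].
  apply/seteqP; split.
    move=> _ [y Ky <-]; split; first by apply: KK'; exists y.
    by have [V [oV Vy VK]] := image_component_locally_open Ky; exists V.
  move=> z [K'z [V [_ VK] Vz]]; apply: VK; split => //.
  exact: connected_component_sub K'z.
- exists (h1 @` lt) => //; apply/seteqP; split.
    move=> _ [y Ky <-]; split; first by apply: KK'; exists y.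
    by exists y => //; rewrite ltK; exact: subset_closure.
  move=> z [K'z [p ltp pz]].
  have Afp : Af p.
    apply/(lift_set_transport (ltE _ ltp)); rewrite pz.
    exact: connected_component_sub K'z.
  by exists p => //; apply: connected_component_closure => //; rewrite -ltK.
Qed.

Lemma image_lift : is_arc X lt -> Af x ->
  Ag (h1 x) /\ h1 @` lt = closure K'.
Proof.
move=> [j [[cj _] ltj]] Afx.
have Ex : E x by apply: ltE; rewrite ltK; exact/subset_closure/connected_component_refl.
split; first exact/(lift_set_transport Ex).
have lt_closed : closed (h1 @` lt).
  apply: compact_closed (@norm_hausdorff _ _) _.
  rewrite ltj image_comp; apply: (continuous_compact _ unitI_compact).
  by apply: (continuous_within_comp cj h1_cont) => t tI; apply: ltE; rewrite ltj; exists t.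
rewrite -image_lift_component //; apply/seteqP; split.
  move=> _ [p ltp <-] B /((within_continuousP _ _).1 h1_cont p (ltE _ ltp)) hB.
  have clp : closure K p by rewrite -ltK.
  have [y [Ky By]] := clp _ hB.
  by exists (h1 y); split; [exists y|exact: By (KE _ Ky)].
have Klt : K `<=` lt by rewrite ltK; exact: subset_closure.
by move=> z /(closureS (image_subset h1 Klt)) /lt_closed.
Qed.

End component.
End lift_transport.

Section system_transport.
Context {R : realType} {f g c : T3 R -> T3 R} {h : R -> T3 R -> T3 R}.
Context {X E W D : set (T3 R)} {a b : T3 R}.
Hypothesis mf : marked f X.
Hypothesis h_cont :
  {within [set p | unitI p.1 /\ E p.2], continuous (fun p => h p.1 p.2)}.
Hypothesis h_emb :
  forall t, unitI t -> embedding_on E (h t) /\ h t @` E `<=` S2.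
Hypothesis h0 : forall x, E x -> h 0 x = x.
Hypothesis h_out : forall t x, unitI t -> E x -> ~ W x -> h t x = x.
Hypothesis h1_image : h 1 @` E = S2 `\` (D `\` [set a; b]).
Hypotheses (c_cont : {within S2 `\` sInt D, continuous c})
  (c_out : forall x, (S2 `\` sInt D) x -> ~ W x -> c x = x)
  (cK : forall y, E y -> c (h 1 y) = y).
Hypothesis g_out : forall x, (S2 `\` sInt D) x -> g x = f (c x).
Hypotheses (D_closed : closed D) (DW : D `<=` W `|` [set a; b]).
Hypotheses (a_notin_intD : ~ sInt D a) (b_notin_intD : ~ sInt D b).
Hypotheses (a_notin_W : ~ W a) (b_notin_W : ~ W b).
Hypotheses (XW : forall x, X x -> ~ W x) (XE : X `<=` E) (ES : E `<=` S2).
Hypotheses (Ea : E a) (Eb : E b) (Xfa : X (f a)) (Xfb : X (f b)).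

Local Notation push := (fun l => h 1 @` l).

Let h_fixX t x : unitI t -> X x -> h t x = x.
Proof. by move=> tI Xx; apply: h_out => //; [exact: XE|exact: XW]. Qed.

Let h1a : h 1 a = a. Proof. exact: h_out unitI1 Ea a_notin_W. Qed.
Let h1b : h 1 b = b. Proof. exact: h_out unitI1 Eb b_notin_W. Qed.

Let h1_inj : inj_on E (h 1).
Proof. by have [[]] := h_emb 1 unitI1. Qed.

Let h1_cont : {within E, continuous (h 1)}.
Proof. by have [[_ []]] := h_emb 1 unitI1. Qed.

Let h1_img y : E y -> S2 (h 1 y) /\ ~ (D `\` [set a; b]) (h 1 y).
Proof.
move=> Ey; have : (h 1 @` E) (h 1 y) by exists y.
by rewrite h1_image => -[].
Qed.

Let h1_onto z : S2 z -> ~ D z -> exists2 y, E y & h 1 y = z.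
Proof.
move=> Sz nDz; have : (S2 `\` (D `\` [set a; b])) z by split => // -[].
by rewrite -h1_image => -[y Ey <-]; exists y.
Qed.

Lemma ambient_image_off_intD : h 1 @` E `<=` S2 `\` sInt D.
Proof.
move=> _ [y Ey <-]; have [Sy nDab] := h1_img _ Ey; split => // intD.
have [[ya|yb]|nab] := pselect ([set a; b] (h 1 y)).
- by apply: a_notin_intD; rewrite -ya.
- by apply: b_notin_intD; rewrite -yb.
- by apply: nDab; split => //; exact: intD.1.
Qed.

Let c_cont_image : {within h 1 @` E, continuous c}.
Proof. exact: continuous_subspaceW ambient_image_off_intD c_cont. Qed.

Let c_fixX x : X x -> c x = x.
Proof.
move=> Xx; apply: c_out; last exact: XW.
split; first exact/ES/XE.
move=> intD; case: (DW _ intD.1) => [/(XW _ Xx)//|[ax|bx]].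
- by apply: a_notin_intD; rewrite -ax.
- by apply: b_notin_intD; rewrite -bx.
Qed.

Let gE y : E y -> g (h 1 y) = f y.
Proof. by move=> Ey; rewrite g_out ?cK //; exact/ambient_image_off_intD. Qed.

Let arc_iso_push {lt l : set (T3 R)} :
  lt `<=` E -> arc_iso X (h 1 @` lt) l <-> arc_iso X lt l.
Proof.
move=> ltE.
exact: (arc_iso_ambientE h_cont h_emb h0 h_fixX XE c_cont_image cK c_fixX ES ltE).
Qed.

Lemma arc_system_transport (Lt : set (set (T3 R))) :
  arc_system X Lt -> (forall lt, Lt lt -> lt `<=` E) -> arc_system X (push @` Lt).
Proof.
move=> [arcLt isoLt] LtE; split.
- by move=> _ [lt Ltlt <-]; apply: is_arc_ambient => //; [exact: LtE|exact: arcLt].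
- move=> _ _ [lt1 Lt1 <-] [lt2 Lt2 <-] iso12.
  have /(arc_iso_push (LtE _ Lt1))/arc_iso_sym i1 := iso12.
  have /(arc_iso_push (LtE _ Lt2)) i2 := i1.
  by rewrite (isoLt lt2 lt1 Lt2 Lt1 i2).
Qed.

Lemma lift_of_system_transport (L0 Lt : set (set (T3 R))) :
  (forall l, L0 l -> is_arc X l) -> lift_of_system f X L0 Lt ->
  (forall lt, Lt lt -> lt `<=` E) -> lift_of_system g X L0 (push @` Lt).
Proof.
move=> arcL0 [arcLt liftLt] LtE; split; first exact: arc_system_transport.
move=> _ [lt Ltlt <-]; have [l [L0l [x [Afx ltK]]]] := liftLt lt Ltlt.
have KE : connected_component (S2 `&` f @^-1` (l `\` X)) x `<=` E.
  by move=> y Ky; apply: (LtE _ Ltlt); rewrite ltK; exact: subset_closure.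
have [Agx ->] := image_lift mf ES h1_cont h1_inj h1_img h1_onto cK c_cont gE
  D_closed h1a h1b Ea Eb Xfa Xfb (arcL0 _ L0l) KE ltK (LtE _ Ltlt) (arcLt.1 _ Ltlt) Afx.
by exists l; split => //; exists (h 1 x).
Qed.

Lemma sys_iso_transport (Lt Lam : set (set (T3 R))) :
  (forall lt, Lt lt -> lt `<=` E) -> sys_iso X Lt Lam -> sys_iso X (push @` Lt) Lam.
Proof.
move=> LtE [isoLt isoLam]; split.
- move=> _ [lt Ltlt <-]; have [l [[Laml ltl] uniq]] := isoLt lt Ltlt.
  exists l; split; first by split => //; apply/(arc_iso_push (LtE _ Ltlt)).
  by move=> l' [Laml' /(arc_iso_push (LtE _ Ltlt)) ltl']; apply: uniq.
- move=> l Laml; have [lt [[Ltlt llt] uniq]] := isoLam l Laml.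
  exists (h 1 @` lt); split.
    by split; [exists lt|exact/arc_iso_sym/(arc_iso_push (LtE _ Ltlt))/arc_iso_sym].
  move=> _ [[lt' Ltlt' <-] /arc_iso_sym/(arc_iso_push (LtE _ Ltlt'))/arc_iso_sym llt'].
  by rewrite (uniq lt' (conj Ltlt' llt')).
Qed.

Lemma fwd_invariant_transport {Lam L0 Lt : set (set (T3 R))} :
  (forall l, Lam l -> is_arc X l) -> L0 `<=` Lam -> lift_of_system f X L0 Lt ->
  sys_iso X Lt Lam -> (forall lt, Lt lt -> lt `<=` E) -> fwd_invariant g X Lam.
Proof.
move=> arcLam L0Lam liftLt isoLt LtE; exists L0, (push @` Lt); split => //; split.
- by apply: lift_of_system_transport => // l /L0Lam; exact: arcLam.
- exact: sys_iso_transport.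
Qed.

End system_transport.

Section blowing_up_conditions.
Context {R : realType} {f : T3 R -> T3 R} {X alpha : set (T3 R)} {a b : T3 R}.
Hypothesis buc : blowing_up_conditions f X alpha a b.

Lemma blowing_up_endpoints : X (f a) /\ X (f b).
Proof.
have [[_ [j [cj [_ [injj [j0 [j1 alphaE]]]]]]] [_ [[L [al [_ [alU arcs]]]] _]]] := buc.
have endp := arc_union_endpoint cj injj (etrans (esym alphaE) alU) arcs.
rewrite -j0 -j1; split.
- by have [] := endp 0 (or_introl erefl).
- by have [] := endp 1 (or_intror erefl).
Qed.

Lemma blowing_up_arc_endpoints : [/\ alpha a, alpha b & alpha `<=` S2].
Proof.
have [[_ [j [_ [Sj [_ [<- [<- ->]]]]]]] _] := buc.
split; last by move=> _ [t /Sj ? <-].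
- by exists 0 => //; exact: unitI0.
- by exists 1 => //; exact: unitI1.
Qed.

Lemma blowing_up_X_off_interior {x} : X x -> ~ arcInt alpha a b x.
Proof.
have [_ [_ [_ IaXC]]] := buc.
move=> Xx Iax; have : (arcInt alpha a b `&` (X `|` crit f)) x by split => //; left.
by rewrite IaXC.
Qed.

Lemma blowing_up_X_off_W {W : set (T3 R)} :
  marked f X ->
  closure W `&` (S2 `&` f @^-1` X) = alpha `&` (S2 `&` f @^-1` X) ->
  bdry_open W a -> bdry_open W b -> forall x, X x -> ~ W x.
Proof.
move=> [_ [_ [_ [XS [_ fX]]]]] clW [_ nWa] [_ nWb] x Xx Wx.
have : (closure W `&` (S2 `&` f @^-1` X)) x.
  by split; [exact: subset_closure|split; [exact: XS|apply: fX; exists x]].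
rewrite clW => -[alx _].
have [[xa|xb]|nab] := pselect ([set a; b] x).
- by apply: nWa; rewrite -xa.
- by apply: nWb; rewrite -xb.
- exact: blowing_up_X_off_interior Xx (conj alx nab).
Qed.

End blowing_up_conditions.

Theorem mainTheorem6 (R : realType) (f g : T3 R -> T3 R)
    (X alpha : set (T3 R)) (a b : T3 R) (n : nat) (Lam : set (set (T3 R))) :
  marked f X ->
  blowing_up_conditions f X alpha a b ->
  (1 <= n)%N ->
  blown_up f X alpha a b n g ->
  arc_system X Lam ->
  fwd_invariant f X Lam ->
  (exists L0 Lt, L0 `<=` Lam /\ lift_of_system f X L0 Lt /\ sys_iso X Lt Lam /\
     forall lt, Lt lt -> lt `&` arcInt alpha a b = set0) ->
  fwd_invariant g X Lam.
Proof.
move=> mf buc _ bu [arcLam _] _ [L0 [Lt [L0Lam [liftLt [isoLt LtIa]]]]].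
have [Xfa Xfb] := blowing_up_endpoints buc.
have [alpha_a alpha_b alphaS] := blowing_up_arc_endpoints buc.
case: bu => W [D [Dp [Dm [c [h [h' [h'' [[_ [_ [Wa [Wb [clW _]]]]] BU]]]]]]]].
case: BU => [[[W' [_ DE]] [DW [[_ Da] [_ Db]]]] [[hc [hemb [h0 [hW himg]]]] BU]].
case: BU => [[cc [_ [cW cK]]] [_ [_ [_ [gout _]]]]].
have XW := blowing_up_X_off_W buc mf clW Wa Wb.
have XE : X `<=` S2 `\` arcInt alpha a b.
  move=> x Xx; split; first exact: mf.2.2.2.1.
  exact: (blowing_up_X_off_interior buc Xx).
have Ea : (S2 `\` arcInt alpha a b) a by split; [exact: alphaS|move=> [_ []]; left].
have Eb : (S2 `\` arcInt alpha a b) b by split; [exact: alphaS|move=> [_ []]; right].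
have LtE lt : Lt lt -> lt `<=` S2 `\` arcInt alpha a b.
  move=> Ltlt y lty; split; first exact: is_arc_sub_S2 (liftLt.1.1 _ Ltlt) _ lty.
  move=> Iy; have : (lt `&` arcInt alpha a b) y by split.
  by rewrite LtIa.
have Dc : closed D by rewrite DE; exact: closed_closure.
exact: (fwd_invariant_transport mf hc hemb h0 hW himg cc cW cK gout Dc DW Da Db
  Wa.2 Wb.2 XW XE (fun _ => @proj1 _ _) Ea Eb Xfa Xfb arcLam L0Lam liftLt isoLt LtE).
Qed.
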